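(* Let $\mathcal{F}$ satisfy the standard conditions. If $A:\mathbb{N}\to\mathbb{Q}$ is an $\mathcal{F}$-sequence with $A(x)\neq0$ for all $x$, then $1/A$ is an $\mathcal{F}$-sequence.
   Context: $\mathbb{N}=\{0,1,2,\dots\}$. $\mathcal{F}$ is a set of functions $\mathbb{N}^n\to\mathbb{N}$ ($n\ge0$). It satisfies the standard conditions if it contains the zero function $Z(x)=0$, the successor $S(x)=x+1$, all projections $P^n_i(x_1,\dots,x_n)=x_i$, addition, multiplication and modified subtraction $x\dot- y=\max(x-y,0)$, and is closed under composition. An $\mathcal{F}$-sequence is a function $A:\mathbb{N}\to\mathbb{Q}$ of the form $A(x)=\frac{f(x)-g(x)}{h(x)+1}$ with $f,g,h:\mathbb{N}\to\mathbb{N}$ in $\mathcal{F}$. *)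

From mathcomp Require Import all_boot all_order all_algebra.
Set Implicit Arguments. Unset Strict Implicit. Unset Printing Implicit Defensive.
Import GRing.Theory Num.Theory.

(* A function N^n -> N is represented as a map ('I_n -> nat) -> nat
   (an argument vector x = (x_0,...,x_{n-1})).
   A class of functions is a predicate on all arities. *)
Definition fclass := forall n : nat, (('I_n -> nat) -> nat) -> Prop.

Definition Zf : ('I_1 -> nat) -> nat := fun _ => 0%N.
Definition Sf : ('I_1 -> nat) -> nat := fun x => (x ord0).+1.
Definition Proj (n : nat) (i : 'I_n) : ('I_n -> nat) -> nat := fun x => x i.
Definition arg0 : 'I_2 := ord0.
Definition arg1 : 'I_2 := ord_max.
Definition Addf : ('I_2 -> nat) -> nat := fun x => (x arg0 + x arg1)%N.
Definition Mulf : ('I_2 -> nat) -> nat := fun x => (x arg0 * x arg1)%N.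
(* Modified subtraction x -' y = max(x - y, 0): ssrnat's truncated subn. *)
Definition Subf : ('I_2 -> nat) -> nat := fun x => (x arg0 - x arg1)%N.

Definition compose (m n : nat) (f : ('I_m -> nat) -> nat)
  (g : 'I_m -> ('I_n -> nat) -> nat) : ('I_n -> nat) -> nat :=
  fun x => f (fun i => g i x).

Definition standard_conditions (F : fclass) : Prop :=
  F 1 Zf /\ F 1 Sf /\ (forall n (i : 'I_n), F n (Proj i)) /\
      F 2 Addf /\ F 2 Mulf /\ F 2 Subf /\
      (forall m n (f : ('I_m -> nat) -> nat) (g : 'I_m -> ('I_n -> nat) -> nat),
          F m f -> (forall i, F n (g i)) -> F n (compose f g)).

Definition unary (f : nat -> nat) : ('I_1 -> nat) -> nat := fun x => f (x ord0).

Definition in_F1 (F : fclass) (f : nat -> nat) : Prop := F 1 (unary f).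

Definition F_sequence (F : fclass) (A : nat -> rat) : Prop :=
  exists f g h : nat -> nat,
    [/\ in_F1 F f, in_F1 F g, in_F1 F h &
        forall x, A x = (((f x)%:R - (g x)%:R) / ((h x)%:R + 1))%R].

From mathcomp Require Import all_boot all_order all_algebra zify.
Import GRing.Theory Num.Theory.
Local Open Scope ring_scope.

(* Write p = f -' g and q = g -' f, so that f - g = p - q with p or q zero and
   |f - g| = p + q.  Then 1/A = (h + 1) (sg p - sg q) / (p + q), and both the
   sign sg n = 1 -' (1 -' n) and the denominator (p + q -' 1) + 1 are built
   from f, g, h by the operations F is closed under. *)

Definition sgn (n : nat) : nat := (1 - (1 - n))%N.

Lemma sgnE (n : nat) : sgn n = (0 < n)%N.
Proof. by case: n. Qed.

Section ClosureProperties.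

Context {F : fclass} (HF : standard_conditions F).

Lemma in_F1_comp2 (b : nat -> nat -> nat) (u v : nat -> nat) :
  F 2 (fun x => b (x arg0) (x arg1)) -> in_F1 F u -> in_F1 F v ->
  in_F1 F (fun n => b (u n) (v n)).
Proof.
case: HF => [_ [_ [_ [_ [_ [_ HFcomp]]]]]] Hb Hu Hv.
pose uv : 'I_2 -> ('I_1 -> nat) -> nat :=
  fun i => if val i == 0%N then unary u else unary v.
by apply: (HFcomp _ _ _ uv Hb) => i; rewrite /uv; case: ifP.
Qed.

Lemma in_F1_add (u v : nat -> nat) :
  in_F1 F u -> in_F1 F v -> in_F1 F (fun n => u n + v n)%N.
Proof. by apply: in_F1_comp2; case: HF => [_ [_ [_ []]]]. Qed.

Lemma in_F1_mul (u v : nat -> nat) :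
  in_F1 F u -> in_F1 F v -> in_F1 F (fun n => u n * v n)%N.
Proof. by apply: in_F1_comp2; case: HF => [_ [_ [_ [_ []]]]]. Qed.

Lemma in_F1_sub (u v : nat -> nat) :
  in_F1 F u -> in_F1 F v -> in_F1 F (fun n => u n - v n)%N.
Proof. by apply: in_F1_comp2; case: HF => [_ [_ [_ [_ [_ []]]]]]. Qed.

Lemma in_F1_one : in_F1 F (fun _ => 1%N).
Proof.
case: HF => [HZ [HS [_ [_ [_ [_ HFcomp]]]]]].
exact: (HFcomp _ _ _ (fun _ => Zf) HS (fun _ => HZ)).
Qed.

Lemma in_F1_sgn (u : nat -> nat) : in_F1 F u -> in_F1 F (fun n => sgn (u n)).
Proof.
by move=> Hu; apply: in_F1_sub in_F1_one _; apply: in_F1_sub in_F1_one _.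
Qed.

End ClosureProperties.

Lemma natrB_trunc (R : pzRingType) (m n : nat) :
  m%:R - n%:R = (m - n)%:R - (n - m)%:R :> R.
Proof.
case: (leqP m n) => [le_mn | /ltnW le_nm].
- by rewrite (eqP le_mn) natrB // sub0r opprB.
- by rewrite (eqP le_nm) natrB // subr0.
Qed.

Lemma invr_natr_diff_ratio (R : numFieldType) (p q h : nat) :
  (p * q = 0)%N -> (p + q != 0)%N ->
  ((p%:R - q%:R) / (h%:R + 1))^-1 =
  (((h + 1) * sgn p)%:R - ((h + 1) * sgn q)%:R) / ((p + q - 1)%:R + 1) :> R.
Proof.
move=> pq0 pq_neq0.
rewrite [_ + 1 in RHS]natr1 subn1 prednK ?lt0n // invf_div !sgnE !natrM natrD.
case: p q pq0 pq_neq0 => [|p] [|q] //= _ _.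
- by rewrite mulr0 mulr1 !sub0r invrN mulrN mulNr add0n.
- by rewrite mulr0 mulr1 !subr0 addn0.
Qed.

Theorem mainTheorem10 (F : fclass) (A : nat -> rat) :
  standard_conditions F -> F_sequence F A -> (forall x, A x != 0) ->
  F_sequence F (fun x => (A x)^-1).
Proof.
move=> HF [f [g [h [Hf Hg Hh HA]]]] A_neq0.
have Hh1 : in_F1 F (fun x => h x + 1)%N by apply: (in_F1_add HF) (in_F1_one HF).
exists (fun x => (h x + 1) * sgn (f x - g x))%N,
       (fun x => (h x + 1) * sgn (g x - f x))%N,
       (fun x => f x - g x + (g x - f x) - 1)%N; split.
- by apply: (in_F1_mul HF) => //; apply/(in_F1_sgn HF)/(in_F1_sub HF).
- by apply: (in_F1_mul HF) => //; apply/(in_F1_sgn HF)/(in_F1_sub HF).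
- apply: (in_F1_sub HF) (in_F1_one HF).
  by apply: (in_F1_add HF); apply: (in_F1_sub HF).
move=> x; have fg_neq : f x != g x.
  by apply: contra (A_neq0 x) => /eqP fg; rewrite HA fg subrr mul0r.
rewrite HA natrB_trunc invr_natr_diff_ratio //; lia.
Qed.
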